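(* For every term $t\in T( *,\circ,x)$ there exists a positive integer $p$ such that $x^{[n]}\equiv_{\mathtt{ALD}} t*x^{[n-p]}$ holds for all sufficiently large $n$.
   Context: $T( *,\circ,x)$ is the set of terms built from a single variable $x$ using two binary operation symbols $*$ and $\circ$. Right vines: $x^{[1]}=x$ and $x^{[n]}=x*x^{[n-1]}$ for $n\ge2$. $\equiv_{\mathtt{ALD}}$ is the congruence on terms generated by the three laws $x*(y*z)=(x*y)*(x*z)$, $x*(y\circ z)=(x*y)\circ(x*z)$, $x*(y*z)=(x\circ y)*z$ (i.e. equality modulo these identities). *)

From Stdlib Require Import Arith.

Inductive term : Type :=
| X : term
| Star : term -> term -> term
| Circ : term -> term -> term.

(* Right vines: x^[1] = x, x^[n] = x * x^[n-1] for n >= 2.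
   (x^[0] is set to x as a harmless junk value; it never matters for
   sufficiently large n.) *)
Fixpoint vine (n : nat) : term :=
  match n with
  | 0 => X
  | 1 => X
  | S m => Star X (vine m)
  end.

Inductive ald_eq : term -> term -> Prop :=
| ald_refl t : ald_eq t t
| ald_sym t u : ald_eq t u -> ald_eq u t
| ald_trans t u v : ald_eq t u -> ald_eq u v -> ald_eq t v
| ald_star t t' u u' : ald_eq t t' -> ald_eq u u' -> ald_eq (Star t u) (Star t' u')
| ald_circ t t' u u' : ald_eq t t' -> ald_eq u u' -> ald_eq (Circ t u) (Circ t' u')
| ald_LD a b c : ald_eq (Star a (Star b c)) (Star (Star a b) (Star a c))
| ald_LDcirc a b c : ald_eq (Star a (Circ b c)) (Circ (Star a b) (Star a c))
| ald_assoc a b c : ald_eq (Star a (Star b c)) (Star (Circ a b) c).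

(* The variable x has period 1.  If t1 and t2 have periods
   p1 and p2, then for large n
     x^[n] == t1 * x^[n-p1] == t1 * (t2 * x^[n-p1-p2]).
   The third ALD law rewrites this as (t1 o t2) * x^[n-p1-p2], so t1 o t2 has
   period p1 + p2; left self-distributivity rewrites it as
   (t1 * t2) * (t1 * x^[n-p2-p1]) == (t1 * t2) * x^[n-p2], so t1 * t2 has
   period p2. *)

From Stdlib Require Import Arith Lia Setoid Morphisms.

Add Relation term ald_eq
  reflexivity proved by ald_refl
  symmetry proved by ald_sym
  transitivity proved by ald_trans
  as ald_eq_rel.

#[export] Instance Star_ald_proper : Proper (ald_eq ==> ald_eq ==> ald_eq) Star.
Proof. intros t t' Ht u u' Hu; exact (ald_star _ _ _ _ Ht Hu). Qed.

Definition vine_period (t : term) (p : nat) : Prop :=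
  0 < p /\ exists N, forall n, N <= n -> ald_eq (vine n) (Star t (vine (n - p))).

Lemma vine_S (n : nat) : 2 <= n -> vine n = Star X (vine (n - 1)).
Proof. destruct n as [|[|m]]; intros Hn; [lia | lia |]. now rewrite Nat.sub_1_r. Qed.

Lemma vine_period_X : vine_period X 1.
Proof.
  split; [lia|]. exists 2; intros n Hn. now rewrite (vine_S n Hn).
Qed.

Lemma vine_two_steps (t1 t2 : term) (p1 p2 : nat) :
  vine_period t1 p1 -> vine_period t2 p2 ->
  exists N, forall n, N <= n ->
    ald_eq (vine n) (Star t1 (Star t2 (vine (n - p1 - p2)))).
Proof.
  intros [_ [N1 H1]] [_ [N2 H2]]. exists (N1 + N2 + p1). intros n Hn.
  rewrite (H1 n), (H2 (n - p1)) by lia. reflexivity.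
Qed.

Lemma vine_period_Circ (t1 t2 : term) (p1 p2 : nat) :
  vine_period t1 p1 -> vine_period t2 p2 -> vine_period (Circ t1 t2) (p1 + p2).
Proof.
  intros H1 H2. split; [destruct H1; lia|].
  destruct (vine_two_steps t1 t2 p1 p2 H1 H2) as [N H]. exists N; intros n Hn.
  rewrite (H n Hn), ald_assoc, Nat.sub_add_distr. reflexivity.
Qed.

Lemma vine_period_Star (t1 t2 : term) (p1 p2 : nat) :
  vine_period t1 p1 -> vine_period t2 p2 -> vine_period (Star t1 t2) p2.
Proof.
  intros H1 H2. split; [destruct H2; lia|].
  destruct (vine_two_steps t1 t2 p1 p2 H1 H2) as [N H].
  destruct H1 as [_ [N1 H1]]. exists (N + N1 + p2); intros n Hn.
  rewrite (H n), ald_LD by lia.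
  replace (n - p1 - p2) with (n - p2 - p1) by lia.
  rewrite <- (H1 (n - p2)) by lia. reflexivity.
Qed.

Lemma vine_period_exists (t : term) : exists p, vine_period t p.
Proof.
  induction t as [| t1 [p1 H1] t2 [p2 H2] | t1 [p1 H1] t2 [p2 H2]].
  - exists 1; exact vine_period_X.
  - exists p2; exact (vine_period_Star t1 t2 p1 p2 H1 H2).
  - exists (p1 + p2); exact (vine_period_Circ t1 t2 p1 p2 H1 H2).
Qed.

Theorem lemma3p3 :
  forall t : term, exists p : nat, 0 < p /\
    exists N : nat, forall n : nat, N <= n ->
      ald_eq (vine n) (Star t (vine (n - p))).
Proof. exact vine_period_exists. Qed.
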